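(* Let $A\in\mathbb{R}^{m\times n}$, $b\in\mathbb{R}^m$, $C\in\mathbb{R}^{p\times n}$, $d\in\mathbb{R}^p$ and let $\mathcal{Y}\subseteq\mathbb{R}^n$ be a polyhedral set, and assume the polyhedral set $\mathcal{X}^*=\{x\in\mathcal{Y}:Ax=b,\ Cx\le d\}$ is nonempty. Let $\delta\in(0,2)$, $\beta\in(0,2)$, $x_0\in\mathcal{Y}$, and let $x_k$ be generated by algorithm SSP-LS described in the context. Then for all $k\ge0$, $$\mathbb{E}[\mathrm{dist}^2(x_k,\mathcal{X}^* )]\le\Big(1-\frac1c\min\Big(\frac{\delta(2-\delta)}{2\kappa_{\mathrm{block}}^2},\ \frac{2-\delta}{4\delta},\ \frac{\beta(2-\beta)}{2}\Big)\Big)^k\mathrm{dist}^2(x_0,\mathcal{X}^* ).$$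
   Context: The rows of $A$ (with $b$) are partitioned into blocks $(A_\zeta^T,b_\zeta)$, $\zeta\in\Omega_1$, so $A_\zeta^T$ is a block of rows of $A$; the rows of $C$ (with $d$) are partitioned into blocks $(C_\xi^T,d_\xi)$, $\xi\in\Omega_2$. $\mathbf{P}_1$, $\mathbf{P}_2$ are probability distributions on the (finite) block index sets $\Omega_1$, $\Omega_2$. Define $\mathcal{A}_\zeta=\{x:A_\zeta^Tx=b_\zeta\}$ and $\mathcal{C}_\xi=\{x:C_\xi^Tx\le d_\xi\}$, so $\mathcal{X}^*=\mathcal{Y}\cap\bigcap_\zeta\mathcal{A}_\zeta\cap\bigcap_\xi\mathcal{C}_\xi$. $\Pi_S$ denotes Euclidean projection onto a closed convex set $S$, $\mathrm{dist}$ the Euclidean distance. The constant $c\in(0,\infty)$ is a Hoffman constant: $\mathrm{dist}^2(u,\mathcal{X}^* )\le c\,\mathbb{E}_{\zeta\sim\mathbf{P}_1,\xi\sim\mathbf{P}_2}[\mathrm{dist}^2(u,\mathcal{A}_\zeta)+\mathrm{dist}^2(u,\mathcal{C}_\xi)]$ for all $u\in\mathcal{Y}$ (such $c$ exists since $\mathcal{X}^*$ is a nonempty polyhedron). The maximum block condition number is $\kappa_{\mathrm{block}}=\max_{\zeta}\|A_\zeta^T\|\cdot\|(A_\zeta^T)^\dagger\|$, the maximum over blocks $\zeta$ in the support of $\mathbf{P}_1$, with $\dagger$ the Moore–Penrose pseudoinverse and $\|\cdot\|$ the spectral norm. Algorithm SSP-LS: for $k\ge0$, sample $\zeta_k\sim\mathbf{P}_1$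 and $\xi_k\sim\mathbf{P}_2$ independently of each other and of the past, and set $\alpha_k=\delta\frac{\|A_{\zeta_k}^Tx_k-b_{\zeta_k}\|^2}{\|A_{\zeta_k}(A_{\zeta_k}^Tx_k-b_{\zeta_k})\|^2}$ (with $0/0=0$), $v_k=x_k-\alpha_kA_{\zeta_k}(A_{\zeta_k}^Tx_k-b_{\zeta_k})$, $z_k=(1-\beta)v_k+\beta\Pi_{\mathcal{C}_{\xi_k}}(v_k)$, $x_{k+1}=\Pi_{\mathcal{Y}}(z_k)$. *)

From HB Require Import structures.
From mathcomp Require Import all_boot all_order all_algebra.
From mathcomp Require Import boolp classical_sets reals.
Set Implicit Arguments. Unset Strict Implicit. Unset Printing Implicit Defensive.
Import Order.TTheory GRing.Theory Num.Theory.
Local Open Scope classical_set_scope.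
Local Open Scope ring_scope.

Section Defs.
Variable R : realType.

Definition sqn {k : nat} (v : 'cV[R]_k) : R := \sum_i (v i 0) ^+ 2.
Definition enorm {k : nat} (v : 'cV[R]_k) : R := Num.sqrt (sqn v).

Definition dist2 {n : nat} (u : 'cV[R]_n) (S : set 'cV[R]_n) : R :=
  inf [set sqn (u - s) | s in S].

Definition proj {n : nat} (S : set 'cV[R]_n) (v : 'cV[R]_n) : 'cV[R]_n :=
  xget 0 (fun y => S y /\ forall s, S s -> sqn (v - y) <= sqn (v - s)).

Definition polyhedral {n : nat} (Y : set 'cV[R]_n) : Prop :=
  exists (q : nat) (G : 'M[R]_(q, n)) (h : 'cV[R]_q),
    Y = [set x | forall i, (G *m x) i 0 <= h i 0].

Definition opnorm {p q : nat} (M : 'M[R]_(p, q)) : R :=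
  sup [set enorm (M *m v) | v in [set v : 'cV[R]_q | enorm v <= 1]].

Definition is_MP_pinv {p q : nat} (M : 'M[R]_(p, q)) (X : 'M[R]_(q, p)) : Prop :=
  [/\ M *m X *m M = M, X *m M *m X = X,
      (M *m X)^T = M *m X & (X *m M)^T = X *m M].
Definition pinv {p q : nat} (M : 'M[R]_(p, q)) : 'M[R]_(q, p) :=
  xget 0 (is_MP_pinv M).

Variables (m n p : nat) (Om1 Om2 : finType).
Variables (A : 'M[R]_(m, n)) (b : 'cV[R]_m) (C : 'M[R]_(p, n)) (d : 'cV[R]_p).
(* row partitions: row i of (A,b) belongs to block blk1 i; row i of (C,d) to blk2 i *)
Variables (blk1 : 'I_m -> Om1) (blk2 : 'I_p -> Om2).

(* block zeta of A (rows not in the block replaced by zero rows) *)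
Definition Ablk (z : Om1) : 'M[R]_(m, n) :=
  \matrix_(i, j) (if blk1 i == z then A i j else 0).
Definition bblk (z : Om1) : 'cV[R]_m :=
  \col_i (if blk1 i == z then b i 0 else 0).

Definition Aset (z : Om1) : set 'cV[R]_n := [set x | Ablk z *m x = bblk z].
Definition Cset (xi : Om2) : set 'cV[R]_n :=
  [set x | forall i, blk2 i = xi -> (C *m x) i 0 <= d i 0].

Definition Xstar (Y : set 'cV[R]_n) : set 'cV[R]_n :=
  [set x | Y x /\ A *m x = b /\ forall i, (C *m x) i 0 <= d i 0].

Definition kappa_block (P1 : Om1 -> R) : R :=
  \big[Num.max/0]_(z | 0 < P1 z) (opnorm (Ablk z) * opnorm (pinv (Ablk z))).

Definition ssp_step (Y : set 'cV[R]_n) (delta beta : R) (z : Om1) (xi : Om2)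
    (x : 'cV[R]_n) : 'cV[R]_n :=
  let r := Ablk z *m x - bblk z in
  let g := (Ablk z)^T *m r in
  let alpha := delta * sqn r / sqn g in   (* x / 0 = 0 in MathComp *)
  let v := x - alpha *: g in
  let zz := (1 - beta) *: v + beta *: proj (Cset xi) v in
  proj Y zz.

(* Expected squared distance E[dist^2(x_k, Xstar)] of the k-th iterate started at x,
   for i.i.d. samples zeta_k ~ P1, xi_k ~ P2 independent of each other *)
Fixpoint exp_dist2 (Y : set 'cV[R]_n) (delta beta : R) (P1 : Om1 -> R) (P2 : Om2 -> R)
    (k : nat) (x : 'cV[R]_n) : R :=
  match k with
  | 0 => dist2 x (Xstar Y)
  | k'.+1 => \sum_(z : Om1) \sum_(xi : Om2)
               P1 z * P2 xi * exp_dist2 Y delta beta P1 P2 k' (ssp_step Y delta beta z xi x)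
  end.

(* the rate constant min(...) ; if kappa_block = 0 the first term is +infinity *)
Definition rate_min (P1 : Om1 -> R) (delta beta : R) : R :=
  let kap := kappa_block P1 in
  let rest := Num.min ((2 - delta) / (4 * delta)) (beta * (2 - beta) / 2) in
  if kap == 0 then rest
  else Num.min (delta * (2 - delta) / (2 * kap ^+ 2)) rest.

End Defs.

(* Fix y in X*.  Each of the three moves of an SSP-LS iteration brings the
   iterate closer to y: the extrapolated step on the block zeta decreases
   |x - y|^2 by delta (2 - delta) T with T = |r|^4 / |A_zeta r|^2, the relaxed
   projection onto C_xi decreases it by beta (2 - beta) |v - Pi(v)|^2, and the
   projection onto Y does not increase it (obtuse-angle property).  These gains
   dominate mu (dist^2(x, A_zeta) + dist^2(x, C_xi)): the point
   x - (A_zeta^T)^+ r lies in A_zeta, so dist^2(x, A_zeta) <= kappa^2 T, and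
   dist^2(x, C_xi) <= 2 |x - v|^2 + 2 |v - Pi(v)|^2.  Averaging over
   (zeta, xi), minimizing over y and applying the Hoffman bound contracts the
   expected squared distance by 1 - mu / c; induction on k concludes.
   Projections onto polyhedra exist because a minimizing sequence is Cauchy by
   the parallelogram law and polyhedra are closed. *)

From HB Require Import structures.
From mathcomp Require Import all_boot all_order all_algebra.
From mathcomp Require Import boolp classical_sets reals.
From mathcomp Require Import ring lra.
Set Implicit Arguments. Unset Strict Implicit. Unset Printing Implicit Defensive.
Import Order.TTheory GRing.Theory Num.Theory.
Local Open Scope classical_set_scope.
Local Open Scope ring_scope.

Section InnerProduct.
Variable R : realType.
Implicit Types (k : nat) (a : R).

Definition dot {k} (u w : 'cV[R]_k) : R := \sum_i u i 0 * w i 0.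

Lemma dotvv k (v : 'cV[R]_k) : dot v v = sqn v.
Proof. by apply: eq_bigr => i _; rewrite expr2. Qed.

Lemma dotC k (u w : 'cV[R]_k) : dot u w = dot w u.
Proof. by apply: eq_bigr => i _; rewrite mulrC. Qed.

Lemma dotDl k (u v w : 'cV[R]_k) : dot (u + v) w = dot u w + dot v w.
Proof. by rewrite /dot -big_split; apply: eq_bigr => i _; rewrite !mxE mulrDl. Qed.

Lemma dotZl k a (u w : 'cV[R]_k) : dot (a *: u) w = a * dot u w.
Proof. by rewrite /dot mulr_sumr; apply: eq_bigr => i _; rewrite !mxE mulrA. Qed.

Lemma dotNl k (u w : 'cV[R]_k) : dot (- u) w = - dot u w.
Proof. by rewrite -scaleN1r dotZl mulN1r. Qed.

Lemma dotBl k (u v w : 'cV[R]_k) : dot (u - v) w = dot u w - dot v w.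
Proof. by rewrite dotDl dotNl. Qed.

Lemma dotDr k (u v w : 'cV[R]_k) : dot w (u + v) = dot w u + dot w v.
Proof. by rewrite dotC dotDl !(dotC w). Qed.

Lemma dotZr k a (u w : 'cV[R]_k) : dot w (a *: u) = a * dot w u.
Proof. by rewrite dotC dotZl dotC. Qed.

Lemma dotNr k (u w : 'cV[R]_k) : dot w (- u) = - dot w u.
Proof. by rewrite dotC dotNl dotC. Qed.

Lemma dotBr k (u v w : 'cV[R]_k) : dot w (u - v) = dot w u - dot w v.
Proof. by rewrite dotDr dotNr. Qed.

Lemma dot0r k (u : 'cV[R]_k) : dot u 0 = 0.
Proof. by rewrite /dot big1 // => i _; rewrite mxE mulr0. Qed.

Lemma dot_mulmxl k l (M : 'M[R]_(k, l)) u w : dot (M *m u) w = dot u (M^T *m w).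
Proof.
rewrite /dot; under eq_bigr => i _ do rewrite mxE big_distrl /=.
rewrite exchange_big /=; apply: eq_bigr => j _.
by rewrite mxE big_distrr /=; apply: eq_bigr => i _; rewrite mxE; ring.
Qed.

Lemma sqn_ge0 k (v : 'cV[R]_k) : 0 <= sqn v.
Proof. by apply: sumr_ge0 => i _; rewrite sqr_ge0. Qed.

Lemma sqn0 k : sqn (0 : 'cV[R]_k) = 0.
Proof. by rewrite -dotvv dot0r. Qed.

Lemma sqn_eq0 k (v : 'cV[R]_k) : (sqn v == 0) = (v == 0).
Proof.
apply/eqP/eqP => [|->]; last exact: sqn0.
move/eqP; rewrite psumr_eq0 => [/allP v0|i _]; last exact: sqr_ge0.
apply/matrixP => i j; rewrite (ord1 j) mxE.
by apply/eqP; rewrite -sqrf_eq0; exact: v0 (mem_index_enum i).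
Qed.

Lemma sqn_gt0 k (v : 'cV[R]_k) : (0 < sqn v) = (v != 0).
Proof. by rewrite lt_def sqn_eq0 sqn_ge0 andbT. Qed.

Lemma sqr_coord_le_sqn k (v : 'cV[R]_k) i : v i 0 ^+ 2 <= sqn v.
Proof. by rewrite /sqn (bigD1 i) //= lerDl; apply: sumr_ge0 => j _; exact: sqr_ge0. Qed.

Lemma sqnD k (u w : 'cV[R]_k) : sqn (u + w) = sqn u + 2 * dot u w + sqn w.
Proof. rewrite -!dotvv !dotDl !dotDr (dotC w u); ring. Qed.

Lemma sqnB k (u w : 'cV[R]_k) : sqn (u - w) = sqn u - 2 * dot u w + sqn w.
Proof. rewrite -!dotvv !dotBl !dotBr (dotC w u); ring. Qed.

Lemma sqnZ k a (u : 'cV[R]_k) : sqn (a *: u) = a ^+ 2 * sqn u.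
Proof. rewrite -!dotvv dotZl dotZr; ring. Qed.

Lemma sqnD_le k (u w : 'cV[R]_k) : sqn (u + w) <= 2 * sqn u + 2 * sqn w.
Proof. have := sqn_ge0 (u - w); rewrite sqnB sqnD; lra. Qed.

Lemma cauchy_schwarz k (u w : 'cV[R]_k) : dot u w ^+ 2 <= sqn u * sqn w.
Proof.
have [->|w0] := eqVneq w 0; first by rewrite dot0r sqn0 expr0n mulr0.
have := sqn_ge0 (sqn w *: u - dot u w *: w).
rewrite sqnB !sqnZ dotZl dotZr.
have -> : sqn w ^+ 2 * sqn u - 2 * (sqn w * (dot u w * dot u w)) + dot u w ^+ 2 * sqn w
          = sqn w * (sqn u * sqn w - dot u w ^+ 2) by ring.
by rewrite pmulr_rge0 ?sqn_gt0 // subr_ge0.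
Qed.

End InnerProduct.

Section OperatorNorm.
Variable R : realType.
Implicit Types k l : nat.

Lemma enorm_sqr k (v : 'cV[R]_k) : enorm v ^+ 2 = sqn v.
Proof. by rewrite sqr_sqrtr // sqn_ge0. Qed.

Lemma enorm_ge0 k (v : 'cV[R]_k) : 0 <= enorm v.
Proof. exact: sqrtr_ge0. Qed.

Lemma sqn_mulmx_le_frobenius k l (M : 'M[R]_(k, l)) v :
  sqn (M *m v) <= (\sum_i \sum_j M i j ^+ 2) * sqn v.
Proof.
rewrite /sqn [in leRHS]mulr_suml; apply: ler_sum => i _.
have -> : (M *m v) i 0 = dot (row i M)^T v.
  by rewrite mxE; apply: eq_bigr => j _; rewrite !mxE.
apply: le_trans (cauchy_schwarz _ _) _; apply: ler_wpM2r; first exact: sqn_ge0.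
by rewrite /sqn; under eq_bigr do rewrite !mxE.
Qed.

Lemma opnorm_has_sup k l (M : 'M[R]_(k, l)) :
  has_sup [set enorm (M *m v) | v in [set v : 'cV[R]_l | enorm v <= 1]].
Proof.
split; first by exists (enorm (M *m 0)), 0 => //=; rewrite /enorm sqn0 sqrtr0.
exists (Num.sqrt (\sum_i \sum_j M i j ^+ 2)) => _ [v /= v1 <-].
have F0 : 0 <= \sum_i \sum_j M i j ^+ 2 :> R.
  by apply: sumr_ge0 => i _; apply: sumr_ge0 => j _; exact: sqr_ge0.
have v1' : sqn v <= 1.
  by rewrite -enorm_sqr -(expr1n R 2); apply: lerXn2r; rewrite ?nnegrE ?enorm_ge0.
apply: ler_wsqrtr; apply: le_trans (sqn_mulmx_le_frobenius M v) _.
by rewrite ler_piMr.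
Qed.

Lemma enorm_mulmx_le_opnorm k l (M : 'M[R]_(k, l)) v :
  enorm v <= 1 -> enorm (M *m v) <= opnorm M.
Proof. by move=> v1; apply: (sup_upper_bound (opnorm_has_sup M)); exists v. Qed.

Lemma opnorm_ge0 k l (M : 'M[R]_(k, l)) : 0 <= opnorm M.
Proof.
apply: le_trans (enorm_mulmx_le_opnorm M (v := 0) _); first exact: enorm_ge0.
by rewrite /enorm sqn0 sqrtr0.
Qed.

Lemma sqn_mulmx_le k l (M : 'M[R]_(k, l)) v : sqn (M *m v) <= opnorm M ^+ 2 * sqn v.
Proof.
have [->|v0] := eqVneq v 0; first by rewrite mulmx0 !sqn0 mulr0.
have s0 : enorm v != 0 by rewrite sqrtr_eq0 -ltNge sqn_gt0.
set u := (enorm v)^-1 *: v.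
have u1 : enorm u <= 1.
  have su : sqn u = 1 by rewrite sqnZ -(enorm_sqr v) -exprMn mulVf // expr1n.
  by rewrite /enorm su sqrtr1.
have -> : sqn (M *m v) = sqn v * sqn (M *m u).
  by rewrite /u -scalemxAr sqnZ mulrA -(enorm_sqr v) -exprMn mulfV // expr1n mul1r.
rewrite [leRHS]mulrC; apply: ler_wpM2l; first exact: sqn_ge0.
rewrite -enorm_sqr; apply: lerXn2r; rewrite ?nnegrE ?enorm_ge0 ?opnorm_ge0 //.
exact: enorm_mulmx_le_opnorm.
Qed.

Lemma sqn_trmx_mulmx_le k l (M : 'M[R]_(k, l)) r :
  sqn (M^T *m r) <= opnorm M ^+ 2 * sqn r.
Proof.
set g := M^T *m r.
have [g0|gn0] := eqVneq g 0; first by rewrite g0 sqn0 mulr_ge0 ?exprn_ge0 ?opnorm_ge0 ?sqn_ge0.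
have gp : 0 < sqn g by rewrite sqn_gt0.
have sqn_gE : sqn g = dot r (M *m g) by rewrite dotC dot_mulmxl dotvv.
have := cauchy_schwarz r (M *m g); rewrite -sqn_gE => cs.
rewrite -(ler_pM2r gp) -expr2; apply: le_trans cs _.
apply: le_trans (ler_wpM2l (sqn_ge0 r) (sqn_mulmx_le M g)) _.
by rewrite mulrCA mulrA.
Qed.

End OperatorNorm.

Section Pseudoinverse.
Variable R : realType.

Lemma mulmx_trmx_eq0 k (w : 'rV[R]_k) : w *m w^T = 0 -> w = 0.
Proof.
move=> ww0; apply: trmx_inj; rewrite trmx0; apply/eqP; rewrite -sqn_eq0.
have := congr1 (fun N : 'M[R]_1 => N 0 0) ww0; rewrite !mxE => <-.
by apply/eqP; apply: eq_bigr => j _; rewrite !mxE expr2.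
Qed.

Lemma gram_unitmx a r (F : 'M[R]_(a, r)) : row_free F^T -> F^T *m F \in unitmx.
Proof.
move=> Ffree; rewrite -row_free_unit; apply: inj_row_free => v vF0.
have : (v *m F^T) *m (v *m F^T)^T = 0.
  by rewrite trmx_mul trmxK mulmxA -(mulmxA v) vF0 mul0mx.
by move/mulmx_trmx_eq0/eqP; rewrite mulmx_free_eq0 // => /eqP.
Qed.

Lemma MP_pinv_full_rank_factor a r b (F : 'M[R]_(a, r)) (G : 'M[R]_(r, b)) :
  F^T *m F \in unitmx -> G *m G^T \in unitmx ->
  is_MP_pinv (F *m G) (G^T *m invmx (G *m G^T) *m invmx (F^T *m F) *m F^T).
Proof.
move=> uF uG.
set iF := invmx (F^T *m F); set iG := invmx (G *m G^T).
have iFK : iF *m (F^T *m F) = 1%:M by rewrite mulVmx.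
have iGK : (G *m G^T) *m iG = 1%:M by rewrite mulmxV.
have tr_iF : iF^T = iF by rewrite /iF trmx_inv trmx_mul trmxK.
have tr_iG : iG^T = iG by rewrite /iG trmx_inv trmx_mul trmxK.
have MX : F *m G *m (G^T *m iG *m iF *m F^T) = F *m iF *m F^T.
  by rewrite !mulmxA -(mulmxA F G) -(mulmxA F) iGK mulmx1.
have XM : G^T *m iG *m iF *m F^T *m (F *m G) = G^T *m iG *m G.
  by rewrite -!mulmxA (mulmxA F^T) (mulmxA iF) iFK mul1mx.
split.
- by rewrite MX !mulmxA -(mulmxA _ F^T) -(mulmxA _ iF) iFK mulmx1.
- rewrite XM !mulmxA -(mulmxA (G^T *m iG) G G^T) -(mulmxA (G^T *m iG) (G *m G^T) iG).
  by rewrite iGK mulmx1.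
- by rewrite MX !trmx_mul trmxK tr_iF mulmxA.
- by rewrite XM !trmx_mul trmxK tr_iG mulmxA.
Qed.

Lemma pinvP a b (M : 'M[R]_(a, b)) : is_MP_pinv M (pinv M).
Proof.
have uF : (col_base M)^T *m col_base M \in unitmx.
  by apply: gram_unitmx; rewrite /row_free mxrank_tr; exact: col_base_full.
have uG : row_base M *m (row_base M)^T \in unitmx.
  by rewrite -[X in X *m _]trmxK; apply: gram_unitmx; rewrite trmxK; exact: row_base_free.
have := MP_pinv_full_rank_factor uF uG; rewrite mulmx_base => MP.
exact: (@xgetI _ 0 _ _ MP).
Qed.

End Pseudoinverse.

Lemma le0_of_le_div_succ (R : archiRealFieldType) (a K : R) :
  (forall k : nat, a <= K / k.+1%:R) -> a <= 0.
Proof.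
move=> aK; rewrite leNgt; apply/negP => a0.
have K0 : 0 < K by have := aK 0%N; rewrite mulr1n divr1; exact: lt_le_trans.
have := aK (Num.truncn (K / a)).
rewrite ler_pdivlMr ?ltr0n // mulrC -ler_pdivlMr //.
by rewrite leNgt truncnS_gt.
Qed.

Lemma cauchy_bound_limit (R : realType) (u f : nat -> R) :
  (forall k l, `|u k - u l| <= f k + f l) -> exists L, forall k, `|u k - L| <= f k.
Proof.
move=> uf; set E := [set u k - f k | k in [set: nat]].
have E0 : E !=set0 by exists (u 0%N - f 0%N), 0%N.
have uE : ubound E (u 0%N + f 0%N).
  by move=> _ [l _ <-]; have := uf l 0%N; rewrite ler_norml; lra.
exists (sup E) => k; rewrite ler_norml; apply/andP; split.
- suff : sup E <= u k + f k by lra.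
  by apply: ge_sup E0 _ => _ [l _ <-]; have := uf l k; rewrite ler_norml; lra.
- suff : u k - f k <= sup E by lra.
  by apply: (sup_upper_bound (conj E0 (ex_intro _ _ uE))); exists k.
Qed.

Section Distance.
Variables (R : realType) (n : nat).
Implicit Types (S : set 'cV[R]_n) (u v w s t x : 'cV[R]_n).

Lemma dist2_le S u s : S s -> dist2 u S <= sqn (u - s).
Proof.
by move=> Ss; apply: ge_inf; [exists 0 => _ [t _ <-]; exact: sqn_ge0 | exists s].
Qed.

Lemma dist2_ge0 S u : S !=set0 -> 0 <= dist2 u S.
Proof.
move=> [s Ss]; apply: lb_le_inf; first by exists (sqn (u - s)), s.
by move=> _ [t _ <-]; exact: sqn_ge0.
Qed.

Lemma dist2_adherent S u e : S !=set0 -> 0 < e ->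
  exists s, S s /\ sqn (u - s) < dist2 u S + e.
Proof.
move=> [s0 Ss0] e0.
have hinf : has_inf [set sqn (u - s) | s in S].
  by split; [exists (sqn (u - s0)), s0 | exists 0 => _ [s _ <-]; exact: sqn_ge0].
by have [_ [s Ss <-] lt_s] := inf_adherent e0 hinf; exists s.
Qed.

Lemma parallelogram_law u s t :
  sqn (s - t) + 4 * sqn (u - 2^-1 *: (s + t)) = 2 * sqn (u - s) + 2 * sqn (u - t).
Proof.
rewrite /sqn !mulr_sumr -!big_split; apply: eq_bigr => i _ /=; rewrite !mxE.
by field.
Qed.

Lemma sqnD_le_coord_bound u w e : (forall j, `|w j 0| <= e) ->
  sqn (u + w) <= sqn u + 2 * (n%:R + sqn u) * e + n%:R * e ^+ 2.
Proof.
move=> we.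
have n_sum : n%:R = \sum_(j < n) (1 : R) by rewrite sumr_const card_ord.
rewrite sqnD -!addrA lerD2l; apply: lerD.
  rewrite -mulrA ler_pM2l // n_sum /dot /sqn -big_split mulr_suml /=; apply: ler_sum => j _.
  apply: le_trans (ler_norm _) _; rewrite normrM.
  have : `|u j 0| <= 1 + u j 0 ^+ 2.
    by rewrite -real_normK ?num_real //; have := normr_ge0 (u j 0); nra.
  by have := we j; have := normr_ge0 (u j 0); have := normr_ge0 (w j 0); nra.
rewrite n_sum /sqn mulr_suml; apply: ler_sum => j _.
rewrite mul1r -real_normK ?num_real //; apply: lerXn2r; rewrite ?nnegrE ?normr_ge0 //.
exact: le_trans (we j).
Qed.

Lemma sqn_sub_le_coord_limit v x D (s : nat -> 'cV[R]_n) : 0 <= D ->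
  (forall k, sqn (v - s k) <= D + k.+1%:R^-1) ->
  (forall k j, `|s k j 0 - x j 0| <= 2 * k.+1%:R^-1) -> sqn (v - x) <= D.
Proof.
move=> D0 vs sx; rewrite -subr_le0.
apply: (@le0_of_le_div_succ _ _ (1 + 4 * (n%:R + D + 1) + 4 * n%:R)) => k.
set a := k.+1%:R^-1; have [a0 a1] : 0 < a /\ a <= 1.
  by rewrite invr_gt0 ltr0n invf_le1 ?ler1n ?ltr0n.
have -> : v - x = (v - s k) + (s k - x) by rewrite addrA subrK.
apply: le_trans (_ : sqn (v - s k) + 2 * (n%:R + sqn (v - s k)) * (2 * a)
                     + n%:R * (2 * a) ^+ 2 - D <= _).
  by rewrite lerD2r; apply: sqnD_le_coord_bound => j; rewrite !mxE; exact: sx.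
have := vs k; rewrite -/a; set w := sqn (v - s k) => vk.
have a2 : a ^+ 2 <= a by rewrite expr2 ler_piMr // ltW.
have wa : w * a <= (D + 1) * a by rewrite ler_pM2r //; lra.
have na : n%:R * a ^+ 2 <= n%:R * a by rewrite ler_wpM2l.
nra.
Qed.

End Distance.

Section Polyhedra.
Variables (R : realType) (n : nat) (S : set 'cV[R]_n).
Hypothesis S_poly : polyhedral S.
Implicit Types (u v w s t x y : 'cV[R]_n).

Lemma polyhedral_convex s t l : S s -> S t -> 0 <= l <= 1 -> S ((1 - l) *: s + l *: t).
Proof.
case: S_poly => q [G [h ->]] /= Gs Gt /andP[l0 l1] i.
have := Gs i; have := Gt i; rewrite mulmxDr -!scalemxAr.
move: (G *m s) (G *m t) => gs gt; rewrite !mxE; nra.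
Qed.

Lemma polyhedral_midpoint s t : S s -> S t -> S (2^-1 *: (s + t)).
Proof.
move=> Ss St; have -> : 2^-1 *: (s + t) = (1 - 2^-1) *: s + 2^-1 *: t.
  by apply/matrixP => i j; rewrite !mxE; field.
by apply: polyhedral_convex; rewrite // invr_ge0 ler0n invf_le1 ?ler1n ?ltr0n.
Qed.

Lemma polyhedral_closed (s : nat -> 'cV[R]_n) x e :
  (forall k, S (s k)) -> (forall k j, `|s k j 0 - x j 0| <= e / k.+1%:R) -> S x.
Proof.
case: S_poly => q [G [h S_def]]; rewrite S_def /= => Ss sx i.
rewrite -subr_le0; apply: (@le0_of_le_div_succ _ _ (\sum_j `|G i j| * e)) => k.
apply: le_trans (_ : (G *m x) i 0 - (G *m s k) i 0 <= _); first by have := Ss k i; lra.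
rewrite !mxE -sumrB mulr_suml; apply: ler_sum => j _.
rewrite -mulrBr -mulrA; apply: le_trans (ler_norm _) _; rewrite normrM.
by apply: ler_wpM2l; rewrite ?normr_ge0 // distrC.
Qed.

Lemma minimizing_pair_sqn_le v s t a b : S s -> S t ->
  sqn (v - s) <= dist2 v S + a -> sqn (v - t) <= dist2 v S + b ->
  sqn (s - t) <= 2 * a + 2 * b.
Proof.
move=> Ss St vs vt.
have := dist2_le v (polyhedral_midpoint Ss St); have := parallelogram_law v s t; lra.
Qed.

Lemma exists_nearest_point v : S !=set0 ->
  exists p, S p /\ forall s, S s -> sqn (v - p) <= sqn (v - s).
Proof.
move=> S_ne; set D := dist2 v S; have D0 : 0 <= D by exact: dist2_ge0.
pose eps k : R := k.+1%:R^-1.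
have eps_gt0 k : 0 < eps k by rewrite invr_gt0 ltr0n.
have eps_le1 k : eps k <= 1 by rewrite invf_le1 ?ler1n ?ltr0n.
have near_min k : exists t, S t /\ sqn (v - t) < D + eps k ^+ 2.
  by apply: dist2_adherent; rewrite ?exprn_gt0.
have [s sP] := choice near_min.
have s_coord k l j : `|s k j 0 - s l j 0| <= 2 * eps k + 2 * eps l.
  have [[Sk vk] [Sl vl]] := (sP k, sP l).
  have := minimizing_pair_sqn_le Sk Sl (ltW vk) (ltW vl).
  have := sqr_coord_le_sqn (s k - s l) j; rewrite !mxE -real_normK ?num_real //.
  have := eps_gt0 k; have := eps_gt0 l; have := normr_ge0 (s k j 0 - s l j 0); nra.
have coord_limit j : exists c, forall k, `|s k j 0 - c| <= 2 * eps k.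
  by apply: cauchy_bound_limit => k l; exact: s_coord.
have [L sL] := choice coord_limit.
pose p := \col_j L j.
have Sp : S p.
  apply: (polyhedral_closed (e := 2)) => [k|k j]; first exact: (sP k).1.
  by rewrite mxE; exact: sL.
exists p; split => // t St; apply: le_trans (dist2_le v St).
apply: (sqn_sub_le_coord_limit (s := s) D0) => [k|k j]; last by rewrite mxE; exact: sL.
apply: le_trans (ltW (sP k).2) _.
by rewrite lerD2l -/(eps k) expr2 ler_piMr ?eps_le1 ?ltW.
Qed.

Lemma projP v : S !=set0 ->
  S (proj S v) /\ forall s, S s -> sqn (v - proj S v) <= sqn (v - s).
Proof.
move=> S_ne; have [p pP] := exists_nearest_point v S_ne.
exact: (xgetI 0 (P := fun y => S y /\ forall s, S s -> sqn (v - y) <= sqn (v - s)) pP).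
Qed.

Lemma proj_variational v y : S !=set0 -> S y -> dot (v - proj S v) (y - proj S v) <= 0.
Proof.
move=> S_ne Sy; have [Sp p_min] := projP v S_ne; set p := proj S v in Sp p_min *.
set a := dot (v - p) (y - p); set b := sqn (y - p).
apply: (@le0_of_le_div_succ _ _ (b / 2)) => k; set l := k.+1%:R^-1.
have l0 : 0 < l by rewrite invr_gt0 ltr0n.
have l1 : l <= 1 by rewrite invf_le1 ?ler1n ?ltr0n.
have := p_min _ (polyhedral_convex Sp Sy (l := l) _); rewrite ltW //= => /(_ l1).
have -> : v - ((1 - l) *: p + l *: y) = (v - p) - l *: (y - p).
  by apply/matrixP => i j; rewrite !mxE; ring.
rewrite [sqn (_ - l *: _)]sqnB sqnZ dotZr -/a -/b => p_le.
rewrite mulrAC; nra.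
Qed.

Lemma sqn_proj_sub_le v y : S !=set0 -> S y -> sqn (proj S v - y) <= sqn (v - y).
Proof.
move=> S_ne Sy; have := proj_variational v S_ne Sy; set p := proj S v => var.
have -> : v - y = (v - p) + (p - y) by rewrite addrA subrK.
rewrite [sqn (_ + (p - y))]sqnD.
have -> : dot (v - p) (p - y) = - dot (v - p) (y - p) by rewrite -dotNr opprB.
have := sqn_ge0 (v - p); lra.
Qed.

Lemma relaxed_proj_sqn_sub_le v y beta : S !=set0 -> S y -> 0 <= beta ->
  sqn ((1 - beta) *: v + beta *: proj S v - y)
    <= sqn (v - y) - beta * (2 - beta) * sqn (v - proj S v).
Proof.
move=> S_ne Sy beta0; have := proj_variational v S_ne Sy; set p := proj S v => var.
have -> : (1 - beta) *: v + beta *: p - y = (v - y) - beta *: (v - p).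
  by apply/matrixP => i j; rewrite !mxE; ring.
have dot_eq : dot (v - y) (v - p) = sqn (v - p) - dot (v - p) (y - p).
  have -> : v - y = (v - p) - (y - p) by rewrite opprB addrA subrK.
  by rewrite dotBl dotvv dotC.
rewrite [sqn (_ - beta *: _)]sqnB sqnZ dotZr dot_eq; nra.
Qed.

End Polyhedra.

Section LineSearch.
Variables (R : realType) (q n : nat) (M : 'M[R]_(q, n)) (h : 'cV[R]_q).
Implicit Types (x y : 'cV[R]_n) (delta : R).

(* When [M^T r = 0] the division by zero makes [ls_step] the identity and
   [ls_gain] zero. *)
Definition ls_step delta x : 'cV[R]_n :=
  let r := M *m x - h in let g := M^T *m r in x - (delta * sqn r / sqn g) *: g.

Definition ls_gain x : R :=
  let r := M *m x - h in sqn r ^+ 2 / sqn (M^T *m r).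

Lemma ls_gain_ge0 x : 0 <= ls_gain x.
Proof. by rewrite divr_ge0 ?exprn_ge0 ?sqn_ge0. Qed.

Lemma sqn_sub_ls_step delta x : sqn (x - ls_step delta x) = delta ^+ 2 * ls_gain x.
Proof.
rewrite /ls_step /ls_gain opprB addrC subrK sqnZ.
set r := M *m x - h; set g := M^T *m r.
have [->|g0] := eqVneq (sqn g) 0; first by rewrite invr0 !(mulr0, expr0n).
by field.
Qed.

Variable y : 'cV[R]_n.
Hypothesis My : M *m y = h.

Lemma dot_sub_residual x : dot (x - y) (M^T *m (M *m x - h)) = sqn (M *m x - h).
Proof. by rewrite -dot_mulmxl mulmxBr My dotvv. Qed.

Lemma ls_step_sqn_sub delta x :
  sqn (ls_step delta x - y) = sqn (x - y) - delta * (2 - delta) * ls_gain x.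
Proof.
have -> : ls_step delta x - y = (x - y) - (delta * sqn (M *m x - h)
    / sqn (M^T *m (M *m x - h))) *: (M^T *m (M *m x - h)).
  by apply/matrixP => i j; rewrite !mxE; ring.
rewrite /ls_gain [sqn (_ - _ *: _)]sqnB sqnZ dotZr dot_sub_residual.
set r := M *m x - h; set g := M^T *m r.
have [->|g0] := eqVneq (sqn g) 0; first by rewrite invr0 !(mulr0, expr0n, mul0r) subr0 addr0.
by field.
Qed.

Lemma sqn_residual_le_gain x : sqn (M *m x - h) <= opnorm M ^+ 2 * ls_gain x.
Proof.
have := dot_sub_residual x; rewrite /ls_gain.
set r := M *m x - h; set g := M^T *m r => rE.
have [g0|g0] := eqVneq g 0.
  by rewrite -rE g0 dot0r sqn0 invr0 !mulr0.
rewrite mulrA ler_pdivlMr ?sqn_gt0 // [sqn r ^+ 2]expr2 mulrCA.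
by apply: ler_wpM2l; [exact: sqn_ge0 | exact: sqn_trmx_mulmx_le].
Qed.

Lemma dist2_affine_le x :
  dist2 x [set u | M *m u = h] <= opnorm (pinv M) ^+ 2 * sqn (M *m x - h).
Proof.
have [MXM _ _ _] := pinvP M.
set r := M *m x - h; set X := pinv M.
have r_def : r = M *m (x - y) by rewrite mulmxBr My.
have mem : M *m (x - X *m r) = h.
  by rewrite mulmxBr mulmxA r_def mulmxA MXM -r_def opprB addrC subrK.
apply: le_trans (dist2_le x mem) _.
by rewrite opprB addrC subrK; exact: sqn_mulmx_le.
Qed.

End LineSearch.

Lemma mask_rows_mulmx (R : realType) q k (P : pred 'I_q) (M : 'M[R]_(q, k))
    (x : 'cV[R]_k) i :
  ((\matrix_(i, j) (if P i then M i j else 0)) *m x) i 0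
  = if P i then (M *m x) i 0 else 0.
Proof.
rewrite !mxE; case: ifP => Pi; first by apply: eq_bigr => j _; rewrite mxE Pi.
by apply: big1 => j _; rewrite mxE Pi mul0r.
Qed.

Section SSPLS.
Variables (R : realType) (m n p : nat) (Om1 Om2 : finType).
Variables (A : 'M[R]_(m, n)) (b : 'cV[R]_m) (C : 'M[R]_(p, n)) (d : 'cV[R]_p).
Variables (blk1 : 'I_m -> Om1) (blk2 : 'I_p -> Om2).
Variables (P1 : Om1 -> R) (Y : set 'cV[R]_n) (delta beta : R).
Hypotheses (Y_poly : polyhedral Y) (delta_range : 0 < delta < 2) (beta_range : 0 < beta < 2).

Local Notation Xs := (Xstar A b C d Y).
Local Notation Az := (Ablk A blk1).
Local Notation bz := (bblk b blk1).
Local Notation kappa := (kappa_block A blk1 P1).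
Local Notation mu := (rate_min A blk1 P1 delta beta).

Lemma Cset_polyhedral xi : polyhedral (Cset C d blk2 xi).
Proof.
exists p, (\matrix_(i, j) (if blk2 i == xi then C i j else 0)),
  (\col_i (if blk2 i == xi then d i 0 else 0)).
apply/seteqP; split => x /= Cx i.
  by rewrite mask_rows_mulmx mxE; case: eqP => // /Cx.
by move=> e; have := Cx i; rewrite mask_rows_mulmx mxE e eqxx.
Qed.

Lemma Xstar_sub_Aset z : Xs `<=` Aset A b blk1 z.
Proof.
move=> y [_ [Ay _]]; apply/matrixP => i j.
by rewrite (ord1 j) mask_rows_mulmx Ay mxE.
Qed.

Lemma Xstar_sub_Cset xi : Xs `<=` Cset C d blk2 xi.
Proof. by move=> y [_ [_ Cy]] i _; exact: Cy. Qed.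

Lemma ssp_stepE z xi x :
  let v := ls_step (Az z) (bz z) delta x in
  ssp_step A b C d blk1 blk2 Y delta beta z xi x
    = proj Y ((1 - beta) *: v + beta *: proj (Cset C d blk2 xi) v).
Proof. by []. Qed.

Lemma kappa_block_ge0 : 0 <= kappa.
Proof. exact: bigmax_ge_id. Qed.

Lemma block_condition_le_kappa z :
  0 < P1 z -> opnorm (Az z) * opnorm (pinv (Az z)) <= kappa.
Proof. exact: le_bigmax_cond. Qed.

Lemma rate_minP :
  [/\ 0 <= mu, mu * (4 * delta) <= 2 - delta, 2 * mu <= beta * (2 - beta)
    & mu * (2 * kappa ^+ 2) <= delta * (2 - delta)].
Proof.
move: delta_range beta_range => /andP[d0 d2] /andP[b0 b2].
have r1 : 0 < (2 - delta) / (4 * delta) by apply: divr_gt0; lra.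
have r2 : 0 < beta * (2 - beta) / 2 by apply: divr_gt0 => //; nra.
rewrite /rate_min; set rest := Num.min _ _.
have rest0 : 0 <= rest by rewrite le_min !ltW.
have [mu0 mu_rest mu_kappa] :
    [/\ 0 <= mu, mu <= rest & mu * (2 * kappa ^+ 2) <= delta * (2 - delta)].
  rewrite /rate_min -/rest; case: eqP => [->|/eqP k0].
    by split; rewrite ?lexx // expr0n mulr0 mulr0; nra.
  have kp : 0 < 2 * kappa ^+ 2.
    by rewrite mulr_gt0 // exprn_gt0 // lt_def k0 kappa_block_ge0.
  split; first by rewrite le_min rest0 divr_ge0 // ?ltW //; nra.
    by rewrite ge_min lexx orbT.
  by rewrite -ler_pdivlMr // ge_min lexx.
split => //.
- by rewrite -ler_pdivlMr ?(le_trans mu_rest) ?ge_min ?lexx //; lra.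
- by rewrite mulrC -ler_pdivlMr ?(le_trans mu_rest) ?ge_min ?lexx ?orbT.
Qed.

Lemma dist2_Aset_le z x y : Xs y -> 0 < P1 z ->
  dist2 x (Aset A b blk1 z) <= kappa ^+ 2 * ls_gain (Az z) (bz z) x.
Proof.
move=> Xy Pz; have Ay := Xstar_sub_Aset z Xy.
apply: le_trans (dist2_affine_le Ay x) _.
apply: le_trans (ler_wpM2l (exprn_ge0 2 (opnorm_ge0 _)) (sqn_residual_le_gain Ay x)) _.
rewrite mulrA -exprMn; apply: ler_wpM2r; first exact: ls_gain_ge0.
apply: lerXn2r; rewrite ?nnegrE ?mulr_ge0 ?opnorm_ge0 ?kappa_block_ge0 //.
by rewrite mulrC; exact: block_condition_le_kappa.
Qed.

Lemma ssp_step_sqn_sub_le z xi x y : Xs y -> 0 < P1 z ->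
  sqn (ssp_step A b C d blk1 blk2 Y delta beta z xi x - y)
    <= sqn (x - y) - mu * (dist2 x (Aset A b blk1 z) + dist2 x (Cset C d blk2 xi)).
Proof.
move=> Xy Pz; have [d0 _] := andP delta_range; have [b0 _] := andP beta_range.
have [Yy _] := Xy; have Cy : Cset C d blk2 xi y by exact: Xstar_sub_Cset.
have C_ne : Cset C d blk2 xi !=set0 by exists y.
rewrite ssp_stepE; set v := ls_step _ _ _ _; set pC := proj _ v.
set T := ls_gain (Az z) (bz z) x; set E := sqn (v - pC).
have T0 : 0 <= T by exact: ls_gain_ge0.
have E0 : 0 <= E by exact: sqn_ge0.
have vy : sqn (v - y) = sqn (x - y) - delta * (2 - delta) * T.
  exact: (ls_step_sqn_sub (Xstar_sub_Aset z Xy) delta x).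
have xv : sqn (x - v) = delta ^+ 2 * T by exact: sqn_sub_ls_step.
have descent : sqn (proj Y ((1 - beta) *: v + beta *: pC) - y)
    <= sqn (x - y) - delta * (2 - delta) * T - beta * (2 - beta) * E.
  apply: le_trans (sqn_proj_sub_le Y_poly _ (ex_intro _ y Yy) Yy) _.
  have := relaxed_proj_sqn_sub_le (Cset_polyhedral xi) v C_ne Cy (ltW b0).
  by rewrite -/pC -/E vy.
have dA := dist2_Aset_le x Xy Pz.
have dC : dist2 x (Cset C d blk2 xi) <= 2 * (delta ^+ 2 * T) + 2 * E.
  apply: le_trans (dist2_le x (projP (Cset_polyhedral xi) v C_ne).1) _.
  by have := sqnD_le (x - v) (v - pC); rewrite addrA subrK -/E xv.
have [mu0 mu_ls mu_relax mu_kappa] := rate_minP.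
have fA : mu * dist2 x (Aset A b blk1 z) <= delta * (2 - delta) / 2 * T.
  apply: le_trans (ler_wpM2l mu0 dA) _; rewrite mulrA; apply: ler_wpM2r => //; nra.
have fC : mu * dist2 x (Cset C d blk2 xi)
    <= delta * (2 - delta) / 2 * T + beta * (2 - beta) * E.
  have mu_delta : mu * (2 * delta ^+ 2) <= delta * (2 - delta) / 2 by nra.
  apply: le_trans (ler_wpM2l mu0 dC) _.
  have := ler_wpM2r T0 mu_delta; have := ler_wpM2r E0 mu_relax; lra.
lra.
Qed.

End SSPLS.

Lemma expect2_affine (R : realType) (I J : finType) (P : I -> R) (Q : J -> R)
    (K mu : R) (f : I -> R) (g : J -> R) :
  \sum_i P i = 1 -> \sum_j Q j = 1 ->
  \sum_i \sum_j P i * Q j * (K - mu * (f i + g j))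
    = K - mu * (\sum_i P i * f i + \sum_j Q j * g j).
Proof.
move=> P1 Q1; set Eg := \sum_j Q j * g j.
have inner i : \sum_j P i * Q j * (K - mu * (f i + g j))
               = P i * K - mu * (P i * f i) - mu * P i * Eg.
  transitivity (\sum_j (Q j * (P i * K - mu * (P i * f i)) - mu * P i * (Q j * g j))).
    by apply: eq_bigr => j _; ring.
  by rewrite sumrB -mulr_suml Q1 mul1r -mulr_sumr.
under eq_bigr do rewrite inner.
rewrite !sumrB -!mulr_suml -!mulr_sumr P1; ring.
Qed.

(* The ratio [1 - mu / c] is not known to be nonnegative; if it is negative,
   the hypotheses force [s = D = 0]. *)
Lemma ler_exprS_mul (R : realType) (q s D : R) k :
  0 <= s -> 0 <= D -> s <= q * D -> q ^+ k * s <= q ^+ k.+1 * D.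
Proof.
move=> s0 D0 sD; rewrite exprSr -mulrA.
have [q0|q0] := lerP 0 q; first by rewrite ler_wpM2l ?exprn_ge0.
have D_eq0 : D = 0 by apply/eqP; rewrite eq_le D0 andbT; nra.
have s_eq0 : s = 0 by apply/eqP; rewrite eq_le s0 andbT; rewrite D_eq0 mulr0 in sD.
by rewrite s_eq0 D_eq0 !mulr0.
Qed.

Section Convergence.
Variables (R : realType) (m n p : nat) (Om1 Om2 : finType).
Variables (A : 'M[R]_(m, n)) (b : 'cV[R]_m) (C : 'M[R]_(p, n)) (d : 'cV[R]_p).
Variables (blk1 : 'I_m -> Om1) (blk2 : 'I_p -> Om2).
Variables (P1 : Om1 -> R) (P2 : Om2 -> R) (Y : set 'cV[R]_n) (c delta beta : R).

Local Notation Xs := (Xstar A b C d Y).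
Local Notation step := (ssp_step A b C d blk1 blk2 Y delta beta).
Local Notation mu := (rate_min A blk1 P1 delta beta).

Hypotheses (P1_ge0 : forall z, 0 <= P1 z) (P1_sum : \sum_z P1 z = 1)
  (P2_ge0 : forall xi, 0 <= P2 xi) (P2_sum : \sum_xi P2 xi = 1)
  (Y_poly : polyhedral Y) (Xs_ne : Xs !=set0) (c_gt0 : 0 < c)
  (hoffman : forall u, Y u ->
     dist2 u Xs <= c * (\sum_z P1 z * dist2 u (Aset A b blk1 z)
                        + \sum_xi P2 xi * dist2 u (Cset C d blk2 xi)))
  (delta_range : 0 < delta < 2) (beta_range : 0 < beta < 2).

Lemma ssp_step_in_Y z xi x : Y (step z xi x).
Proof.
have [y [Yy _]] := Xs_ne.
by rewrite ssp_stepE; exact: (projP Y_poly _ (ex_intro _ y Yy)).1.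
Qed.

Lemma expected_dist2_step x : Y x ->
  \sum_z \sum_xi P1 z * P2 xi * dist2 (step z xi x) Xs <= (1 - c^-1 * mu) * dist2 x Xs.
Proof.
move=> Yx; set s := \sum_z _.
have [mu0 _ _ _] := rate_minP A blk1 P1 delta_range beta_range.
suff : s + c^-1 * mu * dist2 x Xs <= dist2 x Xs by lra.
have [y0 Xy0] := Xs_ne; apply: lb_le_inf; first by exists (sqn (x - y0)), y0.
move=> _ [y Xy <-].
set dA := fun z => dist2 x (Aset A b blk1 z); set dC := fun xi => dist2 x (Cset C d blk2 xi).
have s_le : s <= \sum_z \sum_xi P1 z * P2 xi * (sqn (x - y) - mu * (dA z + dC xi)).
  apply: ler_sum => z _; apply: ler_sum => xi _.
  have [->|Pz] := eqVneq (P1 z) 0; first by rewrite !mul0r.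
  apply: ler_wpM2l; first by rewrite mulr_ge0.
  apply: le_trans (dist2_le _ Xy) _.
  by apply: ssp_step_sqn_sub_le => //; rewrite lt_def Pz P1_ge0.
rewrite expect2_affine // in s_le.
have := hoffman Yx; rewrite -ler_pdivrMl // => /(ler_wpM2l mu0).
move: s_le; lra.
Qed.

Lemma exp_dist2_le k x : Y x ->
  exp_dist2 A b C d blk1 blk2 Y delta beta P1 P2 k x <= (1 - c^-1 * mu) ^+ k * dist2 x Xs.
Proof.
elim: k x => [|k IH] x Yx /=; first by rewrite expr0 mul1r.
set q := 1 - c^-1 * mu.
apply: le_trans (_ : \sum_z \sum_xi P1 z * P2 xi * (q ^+ k * dist2 (step z xi x) Xs) <= _).
  apply: ler_sum => z _; apply: ler_sum => xi _.
  by apply: ler_wpM2l; [rewrite mulr_ge0 | exact: IH (ssp_step_in_Y _ _ _)].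
under eq_bigr do under eq_bigr do rewrite mulrCA.
under eq_bigr do rewrite -mulr_sumr.
rewrite -mulr_sumr.
apply: ler_exprS_mul; last exact: expected_dist2_step.
- by do 2!(apply: sumr_ge0 => ? _); rewrite !mulr_ge0 ?dist2_ge0.
- exact: dist2_ge0.
Qed.

End Convergence.

Theorem theorem7 (R : realType) (m n p : nat) (Om1 Om2 : finType)
  (A : 'M[R]_(m, n)) (b : 'cV[R]_m) (C : 'M[R]_(p, n)) (d : 'cV[R]_p)
  (blk1 : 'I_m -> Om1) (blk2 : 'I_p -> Om2)
  (P1 : Om1 -> R) (P2 : Om2 -> R) (Y : set 'cV[R]_n) (c delta beta : R)
  (x0 : 'cV[R]_n) :
  (forall z, 0 <= P1 z) -> \sum_z P1 z = 1 ->
  (forall xi, 0 <= P2 xi) -> \sum_xi P2 xi = 1 ->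
  polyhedral Y ->
  Xstar A b C d Y !=set0 ->
  0 < c ->
  (forall u, Y u ->
     dist2 u (Xstar A b C d Y) <=
       c * (\sum_z P1 z * dist2 u (Aset A b blk1 z)
            + \sum_xi P2 xi * dist2 u (Cset C d blk2 xi))) ->
  0 < delta < 2 -> 0 < beta < 2 ->
  Y x0 ->
  forall k : nat,
    exp_dist2 A b C d blk1 blk2 Y delta beta P1 P2 k x0
      <= (1 - c^-1 * rate_min A blk1 P1 delta beta) ^+ k * dist2 x0 (Xstar A b C d Y).
Proof.
move=> P1_ge0 P1_sum P2_ge0 P2_sum Y_poly Xs_ne c_gt0 hoffman delta_range beta_range Yx0 k.
exact: (exp_dist2_le P1_ge0 P1_sum P2_ge0 P2_sum Y_poly Xs_ne c_gt0 hoffman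
          delta_range beta_range k Yx0).
Qed.
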